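(* Let $w_1>w_2>\cdots>w_t$ and $u_1,\dots,u_t$ be positive integers, and let $\mathcal{S}=\sum_{i=1}^t w_i$ and $\mathcal{T}=\sum_{i=1}^t u_iw_i$. Suppose that every positive integer up to $\mathcal{S}$ is a sum of a subset of $\{w_1,\dots,w_t\}$. Then every integer $m$ with $0\le m\le \mathcal{T}$ can be written as $m=\sum_{i=1}^t a_iw_i$ with integers $0\le a_i\le u_i$. *)

From mathcomp Require Import all_boot.
Set Implicit Arguments. Unset Strict Implicit. Unset Printing Implicit Defensive.

From mathcomp Require Import all_boot.
From mathcomp Require Import zify.

(* Raising one bound u_j > 0 by one preserves the property "every m up to
   \sum_i u_i w_i is representable with coefficients a_i <= u_i": an m beyond
   the old range is w_j plus a number inside it.  For u = 1 the property is
   exactly the subset-sum hypothesis, and every positive u is reached from 1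
   by such steps. *)

Section BoundedRepresentation.

Variables (I : finType) (w : I -> nat).

Definition bounded_repr (u : I -> nat) (m : nat) :=
  exists a : I -> nat, (forall i, a i <= u i) /\ m = \sum_i a i * w i.

Definition repr_complete (u : I -> nat) :=
  forall m, m <= \sum_i u i * w i -> bounded_repr u m.

Lemma eq_repr_complete (u v : I -> nat) :
  u =1 v -> repr_complete u -> repr_complete v.
Proof.
move=> eq_uv cu m; rewrite -(eq_bigr _ (fun i _ => congr1 (muln^~ _) (eq_uv i))).
by move=> /cu [a [le_au ->]]; exists a; split=> // i; rewrite -eq_uv.
Qed.

Lemma subset_sums_repr_complete :
  (forall n, 0 < n -> n <= \sum_i w i -> exists A : {set I}, n = \sum_(i in A) w i) ->
  repr_complete (fun=> 1).
Proof.
move=> hsub m; rewrite (eq_bigr _ (fun i _ => mul1n (w i))) => le_mS.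
have [->|m_gt0] := posnP m.
  by exists (fun=> 0); split=> //; rewrite big1.
have [A ->] := hsub m m_gt0 le_mS.
exists (fun i => nat_of_bool (i \in A)); split=> [i|]; first by case: (i \in A).
by rewrite big_mkcond; apply: eq_bigr => i _; case: (i \in A); rewrite ?mul1n.
Qed.

Lemma sum_delta (j : I) : \sum_i (i == j) * w i = w j.
Proof. by rewrite (bigD1 j) //= eqxx mul1n big1 ?addn0 // => i /negbTE ->. Qed.

Lemma repr_complete_pred (u : I -> nat) (j : I) : 1 < u j ->
  repr_complete (fun i => u i - (i == j)) -> repr_complete u.
Proof.
move=> lt1u cu' m le_m; set u' := fun i => u i - (i == j) in cu' *.
have u_split i : u i = u' i + (i == j).
  by rewrite /u' subnK //; case: eqP => [->|]; lia.
have sum_split : \sum_i u i * w i = \sum_i u' i * w i + w j.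
  by rewrite -(sum_delta j) -big_split; apply: eq_bigr => i _; rewrite /= -mulnDl -u_split.
have le_u'u i : u' i <= u i by rewrite u_split leq_addr.
have le_wj : w j <= \sum_i u' i * w i.
  rewrite (bigD1 j) //= /u' eqxx; apply: leq_trans (leq_addr _ _).
  by rewrite leq_pmull //; lia.
have [lt_m_wj|le_wj_m] := ltnP m (w j).
  have [a [le_au' ->]] := cu' m (leq_trans (ltnW lt_m_wj) le_wj).
  by exists a; split=> // i; apply: leq_trans (le_u'u i).
have [a [le_au' Ea]] : bounded_repr u' (m - w j).
  by apply: cu'; rewrite leq_subLR addnC -sum_split.
exists (fun i => a i + (i == j)); split=> [i|]; first by rewrite u_split leq_add2r.
by rewrite (eq_bigr _ (fun i _ => mulnDl _ _ _)) big_split /= sum_delta -Ea subnK.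
Qed.

Lemma repr_complete_pos (u : I -> nat) :
  repr_complete (fun=> 1) -> (forall i, 0 < u i) -> repr_complete u.
Proof.
move=> c1; have [N] := ubnP (\sum_i u i); elim: N u => // N IH u lt_uN u_gt0.
case: (pickP (fun j => 1 < u j)) => [j /= lt1u|u_le1]; last first.
  by apply: eq_repr_complete c1 => i; have := u_le1 i; have := u_gt0 i; lia.
apply: (repr_complete_pred _ _ lt1u); apply: IH => [|i]; last first.
  by have := u_gt0 i; case: eqP => [->|] /=; lia.
rewrite (bigD1 j) //= eqxx (eq_bigr u) => [|i /negbTE ->]; last exact: subn0.
by move: lt_uN; rewrite (bigD1 j) //=; lia.
Qed.

End BoundedRepresentation.

Theorem theorem5p5 (t : nat) (w u : 'I_t -> nat)
  (hw_pos : forall i, 0 < w i)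
  (hu_pos : forall i, 0 < u i)
  (hw_dec : forall i j : 'I_t, (i < j)%N -> w j < w i)
  (hsub : forall n, 0 < n -> n <= \sum_(i < t) w i ->
            exists A : {set 'I_t}, n = \sum_(i in A) w i) :
  forall m, m <= \sum_(i < t) u i * w i ->
    exists a : 'I_t -> nat,
      (forall i, a i <= u i) /\ m = \sum_(i < t) a i * w i.
Proof.
exact: repr_complete_pos _ (subset_sums_repr_complete _ _ hsub) hu_pos.
Qed.
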